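(* Let $\gamma,\kappa\ge 2$, memory $m\ge 0$, coupling length $L\ge m+1$ and lifting degree $Z\ge1$, and consider a random QC-SC-LDPC code built from the $\gamma\times\kappa$ fully-connected base graph with uniform edge-spreading over $\{0,1,\ldots,m\}$ and uniform random lifting. Let $\Delta=(2\gamma-3)(2\kappa-3)$ and $$I=\frac{(\Delta-1)^{\Delta-1}}{\Delta^{\Delta}},\qquad II=\frac{27}{256(\gamma\kappa-\gamma-\kappa)}.$$ If $$\frac{2m^2+4m+3}{3(m+1)^3Z}\le\max\{I,II\},$$ then the probability that no 4-cycle candidate $c_4\in\mathcal{C}_4$ is active satisfies $$P\Big(\bigcap_{c_4\in\mathcal{C}_4}\overline{c_4}\Big)\ge\begin{cases}\left(1-\frac{2}{\Delta}\right)^{\frac{\gamma(\gamma-1)\kappa(\kappa-1)\Delta}{8}}, & \text{if } I>II,\\[2pt] \left(1-\frac{\gamma\kappa-\gamma-\kappa+1}{4(\gamma\kappa-\gamma-\kappa)}\right)^{\gamma\kappa}, & \text{otherwise,}\end{cases}$$ and in particular (this probability being positive) there exists such a QC-SC-LDPC code whose Tanner graph has girth at least 6.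
   Context: The base graph is the complete bipartite graph with check nodes $[\gamma]$, variable nodes $[\kappa]$ and edges $[\gamma]\times[\kappa]$ (all-one base matrix, no parallel edges). The code is determined by a partition matrix $\mathbf{P}\in\{0,\ldots,m\}^{\gamma\times\kappa}$ (edge $(i,j)$ goes to component matrix $\mathbf{H}_{\mathbf{P}(i,j)}$; the protograph is formed by stacking $\mathbf{H}_0,\ldots,\mathbf{H}_m$ into a replica and coupling $L$ replicas) and a lifting matrix $\mathbf{L}\in\{0,\ldots,Z-1\}^{\gamma\times\kappa}$ (entry replaced by the circulant permutation matrix $\sigma^{\mathbf{L}(i,j)}$). Randomly, the entries of $\mathbf{P}$ are i.i.d. uniform on $\{0,\ldots,m\}$ and the entries of $\mathbf{L}$ are i.i.d. uniform on $\{0,\ldots,Z-1\}$, independently. $\mathcal{C}_4$ is the set of 4-cycle candidates $(j_1,i_1,j_2,i_2)$ of the base graph (choice of two distinct rows $i_1,i_2$ and two distinct columns $j_1,j_2$); such a candidate is active iff $\mathbf{P}(i_1,j_1)+\mathbf{P}(i_2,j_2)=\mathbf{P}(i_1,j_2)+\mathbf{P}(i_2,j_1)$ and $\mathbf{L}(i_1,j_1)+\mathbf{L}(i_2,j_2)\equiv\mathbf{L}(i_1,j_2)+\mathbf{L}(i_2,j_1)\pmod Z$, and the Tanner graph has girth at least 6 iff no 4-cycle candidate is active. *)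

From HB Require Import structures.
From mathcomp Require Import all_boot all_order all_algebra.
From mathcomp Require Import all_classical all_reals all_analysis.
Set Implicit Arguments. Unset Strict Implicit. Unset Printing Implicit Defensive.
Import Order.TTheory GRing.Theory Num.Theory.

Definition partmx (g k m : nat) := {ffun 'I_g * 'I_k -> 'I_m.+1}.
Definition liftmx (g k Z : nat) := {ffun 'I_g * 'I_k -> 'I_Z}.

Definition active (g k m Z : nat) (P : partmx g k m) (Lf : liftmx g k Z)
  (j1 : 'I_k) (i1 : 'I_g) (j2 : 'I_k) (i2 : 'I_g) : bool :=
  [&& i1 != i2, j1 != j2,
      (P (i1, j1) + P (i2, j2) == P (i1, j2) + P (i2, j1))%N &
      (Lf (i1, j1) + Lf (i2, j2) == Lf (i1, j2) + Lf (i2, j1) %[mod Z])%N].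

Definition no_active (g k m Z : nat) (P : partmx g k m) (Lf : liftmx g k Z) : bool :=
  [forall j1, forall i1, forall j2, forall i2, ~~ active P Lf j1 i1 j2 i2].

(* Probability (uniform i.i.d. P and L, independent) that no candidate is active. *)
Definition prob_no_active (R : realType) (g k m Z : nat) : R :=
  #|[set PL : partmx g k m * liftmx g k Z | no_active PL.1 PL.2]|%:R
  / #|{: partmx g k m * liftmx g k Z}|%:R.

(* Tanner graph of the QC-SC-LDPC code with coupling length Lc:
   check nodes (r, i, z) : replica-row r < Lc + m, base row i, lift index z;
   variable nodes (t, j, w) : replica t < Lc, base column j, lift index w.
   Block (r, t) of the coupled protograph is H_{r-t} (0 if r - t not in [0, m]),
   H_l(i,j) = 1 iff P(i,j) = l; each 1 at base position (i,j) is replaced by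
   the circulant sigma^{L(i,j)} (row z has its 1 in column z + L(i,j) mod Z). *)
Definition tanner_edge (g k m Z Lc : nat) (P : partmx g k m) (Lf : liftmx g k Z)
  (c : 'I_(Lc + m) * 'I_g * 'I_Z) (v : 'I_Lc * 'I_k * 'I_Z) : bool :=
  let: (r, i, z) := c in
  let: (t, j, w) := v in
  [&& (t <= r)%N, (r - t == P (i, j))%N & (w == (z + Lf (i, j)) %% Z :> nat)].

(* Girth at least 6 of the (bipartite, simple) Tanner graph: no cycle of
   length 4, i.e. no two distinct check nodes adjacent to two distinct
   variable nodes. *)
Definition girth_ge6 (g k m Z Lc : nat) (P : partmx g k m) (Lf : liftmx g k Z) : Prop :=
  ~ exists (c1 c2 : 'I_(Lc + m) * 'I_g * 'I_Z) (v1 v2 : 'I_Lc * 'I_k * 'I_Z),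
      [/\ c1 != c2, v1 != v2,
          @tanner_edge g k m Z Lc P Lf c1 v1 && @tanner_edge g k m Z Lc P Lf c1 v2 &
          @tanner_edge g k m Z Lc P Lf c2 v1 && @tanner_edge g k m Z Lc P Lf c2 v2].

Definition Delta (g k : nat) : nat := ((2 * g - 3) * (2 * k - 3))%N.

Local Open Scope ring_scope.

Definition termI (R : realType) (g k : nat) : R :=
  ((Delta g k).-1)%:R ^+ (Delta g k).-1 / (Delta g k)%:R ^+ Delta g k.

Definition termII (R : realType) (g k : nat) : R :=
  27 / (256 * (g * k - g - k)%N%:R).

Definition lower_bound (R : realType) (g k : nat) : R :=
  if termII R g k < termI R g k then
    (1 - 2 / (Delta g k)%:R) `^ ((g * (g - 1) * k * (k - 1) * Delta g k)%N%:R / 8)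
  else
    (1 - (g * k - g - k + 1)%N%:R / (4 * (g * k - g - k)%N%:R)) ^+ (g * k).

From HB Require Import structures.
From mathcomp Require Import all_boot all_order all_algebra.
From mathcomp Require Import all_classical all_reals all_analysis.
From mathcomp Require Import ring lra zify.
Import Order.TTheory GRing.Theory Num.Theory.
Set Implicit Arguments. Unset Strict Implicit. Unset Printing Implicit Defensive.

(* Reveal the labels (P(i,j), L(i,j)) of the base edges one at a time in lexicographic
   order.  A 4-cycle candidate is completed when its bottom-right edge (i,j) is revealed;
   its three other labels are then known, and at most one of the (m+1)Z possible labels of
   (i,j) makes it active.  So, whatever the earlier labels, at most ij labels of (i,j)
   complete an active candidate, and a proportion at least prod_(i,j) (1 - ij/((m+1)Z)) of
   the pairs (P, L) has no active candidate.
   If I > II, the hypothesis gives (γ-1)(κ-1) < (m+1)Z; each factor is then at least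
   exp(-ij), and exp(-sum ij) = exp(-γ(γ-1)κ(κ-1)/4) dominates the first bound because
   ln(1 - 2/Δ) <= -2/Δ.  Otherwise it gives (m+1)Z >= 4(γκ-γ-κ), and as ij <= (γ-1)(κ-1)
   every factor dominates the base of the second bound.
   Finally, a 4-cycle of the Tanner graph projects onto an active candidate. *)

Section SequentialCounting.

Variables (T V : finType).

Definition fupd (f : {ffun T -> V}) (p : T) (v : V) : {ffun T -> V} :=
  [ffun q => if q == p then v else f q].

Lemma fupdE f p v q : fupd f p v q = if q == p then v else f q.
Proof. by rewrite ffunE. Qed.

Lemma fupd_id f p : fupd f p (f p) = f.
Proof. by apply/ffunP => q; rewrite fupdE; case: eqP => [->|]. Qed.

Lemma fupdK f p v w : fupd (fupd f p v) p w = fupd f p w.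
Proof. by apply/ffunP => q; rewrite !fupdE; case: eqP. Qed.

Lemma fupd_at f p v : fupd f p v p = v.
Proof. by rewrite fupdE eqxx. Qed.

Variables (bad : T -> pred {ffun T -> V}) (b : T -> nat).
Hypothesis card_bad_fupd : forall p f, #|[set v | bad p (fupd f p v)]| <= b p.

Definition good_on (A : {set T}) := [set f | [forall p in A, ~~ bad p f]].

Lemma card_good_setU1 (A : {set T}) p :
  (forall q f v, q \in A -> bad q (fupd f p v) = bad q f) ->
  (#|V| - b p) * #|good_on A| <= #|V| * #|good_on (p |: A)|.
Proof.
move=> bad_indep.
(* Double counting: each f good on A has at least #|V| - b p updates at p that are not bad
   at p, and (f, v) |-> (fupd f p v, f p) is injective. *)
pose X := [set fv : {ffun T -> V} * V | (fv.1 \in good_on A) && ~~ bad p (fupd fv.1 p fv.2)].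
have card_X_ge : (#|V| - b p) * #|good_on A| <= #|X|.
  have -> : #|X| = \sum_(f in good_on A) \sum_(v | ~~ bad p (fupd f p v)) 1.
    by rewrite pair_big_dep sum1dep_card.
  rewrite mulnC -sum_nat_const; apply: leq_sum => f _; rewrite sum1dep_card.
  have := cardsC [set v | bad p (fupd f p v)]; have := card_bad_fupd p f.
  have -> : ~: [set v | bad p (fupd f p v)] = [set v | ~~ bad p (fupd f p v)].
    by apply/setP => v; rewrite !inE.
  lia.
have card_X_le : #|X| <= #|V| * #|good_on (p |: A)|.
  have fupd_pair_inj : injective (fun fv : {ffun T -> V} * V => (fupd fv.1 p fv.2, fv.1 p)).
    move=> [f1 v1] [f2 v2] /= [e1 e2].
    have ef : f1 = f2 by rewrite -[f1](fupd_id _ p) -(fupdK _ p v1) e1 e2 fupdK fupd_id.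
    by rewrite -(fupd_at f1 p v1) e1 ef fupd_at.
  rewrite -(card_imset X fupd_pair_inj) mulnC -cardsT -cardsX.
  apply/subset_leq_card/fintype.subsetP => _ /imsetP [[f v] + ->].
  rewrite !inE /= andbT => /andP [/forall_inP good_f not_bad_p].
  apply/forall_inP => q /setU1P [-> // | qA].
  by rewrite bad_indep // good_f.
exact: leq_trans card_X_ge card_X_le.
Qed.

Variable rk : T -> nat.
Hypothesis rk_inj : injective rk.
Hypothesis bad_fupd_later : forall p q f v, rk q < rk p -> bad q (fupd f p v) = bad q f.

Let ranked n := [set p | rk p < n].

(* The proportion of functions good on [ranked n] is at least
   prod_(p in ranked n) (1 - b p / #|V|); here with denominators cleared. *)
Lemma card_good_ranked n :
  \prod_(p in ranked n) (#|V| - b p) * #|V| ^ #|T| <= #|V| ^ #|ranked n| * #|good_on (ranked n)|.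
Proof.
elim: n => [|n IH].
  have -> : ranked 0 = finset.set0 by apply/setP => p; rewrite !inE.
  rewrite big_set0 cards0 !mul1n -card_ffun -cardsT.
  by apply/subset_leq_card/fintype.subsetP => f _; rewrite inE; apply/forall_inP => p; rewrite inE.
case: (pickP [pred p | rk p == n]) => [p /eqP rk_p | no_rank_n]; last first.
  suff -> : ranked n.+1 = ranked n by [].
  by apply/setP => q; rewrite !inE ltnS leq_eqVlt [rk q == n](no_rank_n q).
have ranked_S : ranked n.+1 = p |: ranked n.
  by apply/setP => q; rewrite !inE ltnS leq_eqVlt -rk_p (inj_eq rk_inj).
have p_new : p \notin ranked n by rewrite inE rk_p ltnn.
have step := @card_good_setU1 (ranked n) p.
rewrite ranked_S big_setU1 //= cardsU1 p_new add1n expnS -mulnA.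
apply: (leq_trans (leq_mul (leqnn _) IH)).
rewrite mulnCA [X in _ <= X]mulnAC [X in _ <= X]mulnC leq_mul2l step ?orbT //.
by move=> q f v; rewrite inE -rk_p; apply: bad_fupd_later.
Qed.

Lemma card_good_ge : \prod_p (#|V| - b p) <= #|good_on [set: T]|.
Proof.
have ranked_max : ranked (\max_p rk p).+1 = [set: T].
  by apply/setP => p; rewrite !inE ltnS leq_bigmax.
have := card_good_ranked (\max_p rk p).+1; rewrite ranked_max (eq_bigl _ _ (@finset.in_setT T)) cardsT.
have [/eqP | VT_gt0] := posnP (#|V| ^ #|T|); last by rewrite mulnC leq_pmul2l.
rewrite expn_eq0 => /andP [/eqP V0 /card_gt0P [p _]] _.
by rewrite (bigD1 p) //= V0.
Qed.

End SequentialCounting.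

Lemma card_ord_lt n i : #|[set j : 'I_n | j < i]| <= i.
Proof.
rewrite cardE -(size_map val) -[X in _ <= X](size_iota 0 i).
apply: uniq_leq_size => [|x /mapP [j]]; first by rewrite (map_inj_uniq val_inj) enum_uniq.
by rewrite mem_enum inE mem_iota => j_lt_i ->.
Qed.

Lemma card_le_unique_witness (T I : finType) (B : {set T}) (Q : {set I}) (w : I -> pred T) :
  (forall x, x \in B -> exists2 q, q \in Q & w q x) ->
  (forall q x y, q \in Q -> w q x -> w q y -> x = y) ->
  #|B| <= #|Q|.
Proof.
move=> has_w w_uniq; rewrite -sum1_card -[#|Q|]sum1_card.
apply: (@leq_trans (\sum_(q in Q) \sum_x w q x)).
  rewrite exchange_big /= big_mkcond; apply: leq_sum => x _.
  by case: ifP => // /has_w [q qQ wqx]; rewrite (bigD1 q) //= wqx.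
apply: leq_sum => q qQ; rewrite -big_mkcond sum1dep_card /=.
apply/card_le1_eqP => x y; rewrite !inE => wqx wqy.
exact: w_uniq qQ wqy wqx.
Qed.

Section LabelledCode.

Variables g k m Z : nat.
Local Notation edge := ('I_g * 'I_k)%type.
Local Notation label := ('I_m.+1 * 'I_Z)%type.

(* A pair (P, L) is viewed as one labelling of the base edges by pairs, so that its entries
   can be revealed edge by edge. *)
Definition part_of (f : {ffun edge -> label}) : partmx g k m := [ffun e => (f e).1].
Definition lift_of (f : {ffun edge -> label}) : liftmx g k Z := [ffun e => (f e).2].

Lemma part_lift_of_inj : injective (fun f => (part_of f, lift_of f)).
Proof.
move=> f1 f2 [/ffunP P12 /ffunP L12]; apply/ffunP => e.
by move: (P12 e) (L12 e); rewrite !ffunE; case: (f1 e) (f2 e) => [? ?] [? ?] /= -> ->.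
Qed.

Lemma active_rowC (P : partmx g k m) (L : liftmx g k Z) j1 i1 j2 i2 :
  active P L j1 i2 j2 i1 = active P L j1 i1 j2 i2.
Proof.
rewrite /active eq_sym; congr [&& _, _, _ & _].
  by rewrite eq_sym addnC [(P (i1, j2) + _)%N]addnC.
by rewrite eq_sym addnC [(L (i1, j2) + _)%N]addnC.
Qed.

Lemma active_colC (P : partmx g k m) (L : liftmx g k Z) j1 i1 j2 i2 :
  active P L j2 i1 j1 i2 = active P L j1 i1 j2 i2.
Proof. by rewrite /active eq_sym; congr [&& _, _, _ & _]; rewrite eq_sym. Qed.

Definition corner_active (e : edge) (f : {ffun edge -> label}) : bool :=
  [exists i : 'I_g, exists j : 'I_k,
     [&& i < e.1, j < e.2 & active (part_of f) (lift_of f) j i e.2 e.1]].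

Lemma no_corner_active f :
  [forall e, ~~ corner_active e f] -> no_active (part_of f) (lift_of f).
Proof.
move=> /forallP no_corner.
apply/forallP => j1; apply/forallP => i1; apply/forallP => j2; apply/forallP => i2.
apply/negP => act.
wlog lt_i : i1 i2 act / i1 < i2.
  move=> corner; case: (ltngtP i1 i2) => [|gt_i|/val_inj eq_i]; first exact: corner.
    by apply: (corner i2 i1) gt_i; rewrite active_rowC.
  by move: act; rewrite /active eq_i eqxx.
wlog lt_j : j1 j2 act / j1 < j2.
  move=> corner; case: (ltngtP j1 j2) => [|gt_j|/val_inj eq_j]; first exact: corner.
    by apply: (corner j2 j1) gt_j; rewrite active_colC.
  by move: act; rewrite /active eq_j eqxx andbF.
apply: (negP (no_corner (i2, j2))); rewrite /corner_active /=.
by apply/existsP; exists i1; apply/existsP; exists j1; rewrite lt_i lt_j act.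
Qed.

Definition lex_rank (e : edge) : nat := e.1 * k + e.2.

Lemma lex_rank_inj : injective lex_rank.
Proof.
move=> [i1 j1] [i2 j2]; rewrite /lex_rank /= => eq_rk.
have k_gt0 : 0 < k := leq_ltn_trans (leq0n j1) (ltn_ord j1).
have := congr1 (divn^~ k) eq_rk; have := congr1 (modn^~ k) eq_rk.
rewrite /= !modnMDl !divnMDl // !modn_small // !divn_small // !addn0 => eq_j eq_i.
by congr pair; apply: val_inj.
Qed.

Lemma lex_rank_le (i i' : 'I_g) (j j' : 'I_k) :
  i' <= i -> j' <= j -> lex_rank (i', j') <= lex_rank (i, j).
Proof. by move=> le_i le_j; rewrite leq_add // leq_mul2r le_i orbT. Qed.

Lemma part_lift_of_fupd_ne f p v e : e != p ->
  (part_of (fupd f p v) e = part_of f e) * (lift_of (fupd f p v) e = lift_of f e).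
Proof. by move=> /negbTE ne_p; rewrite !ffunE ne_p. Qed.

Lemma part_lift_of_fupd_at f p v :
  (part_of (fupd f p v) p = v.1) * (lift_of (fupd f p v) p = v.2).
Proof. by rewrite !ffunE eqxx. Qed.

Lemma corner_active_fupd_later p q f v :
  lex_rank q < lex_rank p -> corner_active q (fupd f p v) = corner_active q f.
Proof.
case: q => i j lt_qp; apply: eq_existsb => i'; apply: eq_existsb => j'.
case: (ltnP i' i) => //= lt_i; case: (ltnP j' j) => //= lt_j.
have ne_p (i0 : 'I_g) (j0 : 'I_k) : i0 <= i -> j0 <= j -> (i0, j0) != p.
  by move=> le_i le_j; apply: contraTneq lt_qp => <-; rewrite -leqNgt lex_rank_le.
have [n1 n2 n3 n4] : [/\ (i', j') != p, (i', j) != p, (i, j') != p & (i, j) != p].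
  by split; apply: ne_p => //; apply: ltnW.
by rewrite /active !(part_lift_of_fupd_ne _ _ n1, part_lift_of_fupd_ne _ _ n2,
  part_lift_of_fupd_ne _ _ n3, part_lift_of_fupd_ne _ _ n4).
Qed.

Lemma active_fupd_corner f (i i' : 'I_g) (j j' : 'I_k) v : i' < i -> j' < j ->
  active (part_of (fupd f (i, j) v)) (lift_of (fupd f (i, j) v)) j' i' j i =
  [&& part_of f (i', j') + v.1 == part_of f (i', j) + part_of f (i, j') &
      lift_of f (i', j') + v.2 == lift_of f (i', j) + lift_of f (i, j') %[mod Z]].
Proof.
move=> lt_i lt_j.
have ne_ij (i0 : 'I_g) (j0 : 'I_k) : (i0 < i) || (j0 < j) -> (i0, j0) != (i, j).
  by move=> lt; apply/eqP => -[eq_i eq_j]; move: lt; rewrite eq_i eq_j !ltnn.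
have [n1 n2 n3] : [/\ (i', j') != (i, j), (i', j) != (i, j) & (i, j') != (i, j)].
  by split; apply: ne_ij; rewrite ?lt_i ?lt_j ?orbT.
rewrite /active !part_lift_of_fupd_at !(part_lift_of_fupd_ne _ _ n1,
  part_lift_of_fupd_ne _ _ n2, part_lift_of_fupd_ne _ _ n3).
by rewrite !neq_ltn lt_i lt_j.
Qed.

Lemma active_fupd_corner_uniq f (i i' : 'I_g) (j j' : 'I_k) v1 v2 : i' < i -> j' < j ->
  active (part_of (fupd f (i, j) v1)) (lift_of (fupd f (i, j) v1)) j' i' j i ->
  active (part_of (fupd f (i, j) v2)) (lift_of (fupd f (i, j) v2)) j' i' j i -> v1 = v2.
Proof.
move=> lt_i lt_j; rewrite !active_fupd_corner //.
case: v1 v2 => [a1 l1] [a2 l2] /andP [/eqP eq_a1 eq_l1] /andP [/eqP eq_a2 eq_l2].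
congr pair; apply: val_inj => /=.
  by apply: (@addnI (part_of f (i', j'))); rewrite eq_a1 eq_a2.
apply/eqP; rewrite -(modn_small (ltn_ord l1)) -(modn_small (ltn_ord l2)).
by rewrite -(eqn_modDl (lift_of f (i', j'))) (eqP eq_l1) (eqP eq_l2).
Qed.

Lemma card_corner_active_fupd p f : #|[set v | corner_active p (fupd f p v)]| <= p.1 * p.2.
Proof.
case: p => i j /=; pose rect := [set q : edge | (q.1 < i) && (q.2 < j)].
have card_rect : #|rect| <= i * j.
  have -> : rect = finset.setX [set i' : 'I_g | i' < i] [set j' : 'I_k | j' < j].
    by apply/setP => -[i' j']; rewrite !inE.
  by rewrite cardsX leq_mul ?card_ord_lt.
apply: leq_trans card_rect; apply: (card_le_unique_witness
  (w := fun q v => active (part_of (fupd f (i, j) v)) (lift_of (fupd f (i, j) v)) q.2 q.1 j i)).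
  move=> v; rewrite inE => /existsP [i' /existsP [j' /and3P [lt_i lt_j act]]].
  by exists (i', j'); rewrite // inE lt_i lt_j.
by move=> [i' j'] v1 v2; rewrite inE => /andP [lt_i lt_j]; apply: active_fupd_corner_uniq.
Qed.

Lemma card_no_active_ge : \prod_(e : edge) (m.+1 * Z - e.1 * e.2) <=
  #|[set PL : partmx g k m * liftmx g k Z | no_active PL.1 PL.2]|.
Proof.
have := card_good_ge (b := fun e : edge => e.1 * e.2) card_corner_active_fupd lex_rank_inj
  corner_active_fupd_later.
rewrite card_prod !card_ord => /leq_trans; apply.
rewrite -(card_imset _ part_lift_of_inj); apply/subset_leq_card/fintype.subsetP => _ /imsetP [f + ->].
by rewrite !inE => /forall_inP no_corner; apply/no_corner_active/forallP => e; apply: no_corner.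
Qed.

Lemma card_codes : #|{: partmx g k m * liftmx g k Z}| = (m.+1 * Z) ^ (g * k).
Proof. by rewrite card_prod !card_ffun !card_prod !card_ord expnMn. Qed.

End LabelledCode.

Section TannerGraph.

Variables (g k m Z Lc : nat) (P : partmx g k m) (L : liftmx g k Z).
Local Notation check := ('I_(Lc + m) * 'I_g * 'I_Z)%type.
Local Notation var := ('I_Lc * 'I_k * 'I_Z)%type.
Local Notation adj := (@tanner_edge g k m Z Lc P L).

Lemma tanner_edge_same_row (c1 c2 : check) (v : var) :
  adj c1 v -> adj c2 v -> c1.1.2 = c2.1.2 -> c1 = c2.
Proof.
case: c1 c2 v => [[r1 i1] z1] [[r2 i2] z2] [[t j] w] /= + + eq_i; rewrite -eq_i.
move=> /and3P [le_t1 /eqP d1 /eqP w1] /and3P [le_t2 /eqP d2 /eqP w2].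
have -> : r1 = r2 by apply: val_inj; rewrite /= -(subnK le_t1) -(subnK le_t2) d1 d2.
have -> : z1 = z2.
  apply/val_inj/eqP; rewrite /= -(modn_small (ltn_ord z1)) -(modn_small (ltn_ord z2)).
  by rewrite -(eqn_modDr (L (i1, j))) -w1 -w2.
by [].
Qed.

Lemma tanner_edge_same_col (c : check) (v1 v2 : var) :
  adj c v1 -> adj c v2 -> v1.1.2 = v2.1.2 -> v1 = v2.
Proof.
case: c v1 v2 => [[r i] z] [[t1 j1] w1] [[t2 j2] w2] /= + + eq_j; rewrite -eq_j.
move=> /and3P [le_t1 /eqP d1 /eqP e1] /and3P [le_t2 /eqP d2 /eqP e2].
have -> : t1 = t2 by apply: val_inj; rewrite /= -(subKn le_t1) -(subKn le_t2) d1 d2.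
by have -> : w1 = w2 by apply: val_inj; rewrite /= e1 e2.
Qed.

Lemma tanner_4cycle_active (c1 c2 : check) (v1 v2 : var) :
  c1 != c2 -> v1 != v2 -> adj c1 v1 -> adj c1 v2 -> adj c2 v1 -> adj c2 v2 ->
  active P L v1.1.2 c1.1.2 v2.1.2 c2.1.2.
Proof.
case: c1 c2 v1 v2 => [[r1 i1] z1] [[r2 i2] z2] [[t1 j1] w1] [[t2 j2] w2].
move=> ne_c ne_v e11 e12 e21 e22; apply/and4P; split.
- by apply: contraNneq ne_c => eq_i; apply/eqP; apply: tanner_edge_same_row e11 e21 eq_i.
- by apply: contraNneq ne_v => eq_j; apply/eqP; apply: tanner_edge_same_col e11 e12 eq_j.
- move: e11 e12 e21 e22 => /and3P [? /eqP <- _] /and3P [? /eqP <- _].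
  by move=> /and3P [? /eqP <- _] /and3P [? /eqP <- _]; apply/eqP; lia.
move: e11 e12 e21 e22 => /and3P [_ _ /eqP w11] /and3P [_ _ /eqP w12].
move=> /and3P [_ _ /eqP w21] /and3P [_ _ /eqP w22].
rewrite -(eqn_modDl (z1 + z2)) !(addnACA z1 z2) -modnDm -w11 -w22.
by rewrite -[X in _ == X]modnDm -w12 -w21 addnC.
Qed.

Lemma no_active_girth_ge6 : no_active P L -> girth_ge6 Lc P L.
Proof.
move=> /forallP no_act [c1 [c2 [v1 [v2 [ne_c ne_v /andP [e11 e12] /andP [e21 e22]]]]]].
have := no_act v1.1.2 => /forallP/(_ c1.1.2)/forallP/(_ v2.1.2)/forallP/(_ c2.1.2)/negP.
by apply; apply: tanner_4cycle_active.
Qed.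

End TannerGraph.

Lemma double_sum_ord n : ((\sum_(i < n) i).*2 = n * n.-1)%N.
Proof. by elim: n => [|n IH]; rewrite ?big_ord0 // big_ord_recr doubleD IH /=; case: n {IH}; lia. Qed.

Lemma sum_edge_weights g k :
  ((\sum_(e : 'I_g * 'I_k) e.1 * e.2) * 4 = g * g.-1 * (k * k.-1))%N.
Proof.
rewrite -(pair_bigA _ (fun (i : 'I_g) (j : 'I_k) => i * j)%N) /= -big_distrlr /=.
by rewrite -(double_sum_ord g) -(double_sum_ord k) -!muln2 mulnACA.
Qed.

Local Open Scope ring_scope.

Section RealBounds.

Variable R : realType.

Lemma expR_neg_le_1Bdiv (x s : R) : 0 <= x -> x + 1 <= s -> expR (- x) <= 1 - x / s.
Proof.
move=> x_ge0 le_xs; have s_gt0 : 0 < s by lra.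
apply: (@le_trans _ _ (1 + x)^-1).
  by rewrite expRN lef_pV2 ?posrE ?expR_gt0 ?expR_ge1Dx //; lra.
have x_s : x * (1 + x) / s <= x by rewrite ler_pdivrMr // ler_wpM2l //; lra.
rewrite -[_^-1]mul1r ler_pdivrMr; last lra.
have -> : (1 - x / s) * (1 + x) = 1 + x - x * (1 + x) / s by field; lra.
lra.
Qed.

Lemma powR_1Bdiv_le_expR (d y : R) : 2 < d -> 0 <= y -> (1 - 2 / d) `^ (y * d / 2) <= expR (- y).
Proof.
move=> d_gt2 y_ge0; have d_gt0 : 0 < d by lra.
have base_gt0 : 0 < 1 - 2 / d by rewrite subr_gt0 ltr_pdivrMr // mul1r.
rewrite /powR (gt_eqF base_gt0) ler_expR.
have ln_le : ln (1 - 2 / d) <= - (2 / d).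
  by apply: le_ln1Dx; rewrite ltrN2 ltr_pdivrMr // mul1r.
apply: (le_trans (ler_wpM2l _ ln_le)); first by apply: divr_ge0 => //; apply: mulr_ge0; lra.
suff -> : y * d / 2 * - (2 / d) = - y by [].
by field; lra.
Qed.

Lemma expR_neg_sum_le_prod (I : finType) (w : I -> nat) (s : nat) : (forall i, w i < s)%N ->
  expR (- (\sum_i w i)%:R) <= \prod_i (1 - (w i)%:R / s%:R) :> R.
Proof.
move=> w_lt; rewrite natr_sum -sumrN expR_sum; apply: ler_prod => i _; rewrite expR_ge0.
by apply: expR_neg_le_1Bdiv; [exact: ler0n | rewrite natr1 ler_nat w_lt].
Qed.

Lemma ler_ratio_nat (a b c d : nat) : (0 < b)%N -> (0 < d)%N ->
  (a%:R / b%:R <= c%:R / d%:R :> R) = (a * d <= c * b)%N.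
Proof.
by move=> b_gt0 d_gt0; rewrite ler_pdivrMr ?ltr0n // mulrAC ler_pdivlMr ?ltr0n // -!natrM ler_nat.
Qed.

Lemma pow_pred_div_pow_le_inv n : (0 < n)%N -> n.-1%:R ^+ n.-1 / n%:R ^+ n <= (n%:R : R)^-1.
Proof.
case: n => // n _ /=; rewrite ler_pdivrMr ?exprn_gt0 ?ltr0n // exprS mulrA mulVf ?pnatr_eq0 //.
by rewrite mul1r lerXn2r ?nnegrE ?ler0n ?ler_nat.
Qed.

Lemma prob_no_active_ge g k m Z : (0 < Z)%N -> (forall e : 'I_g * 'I_k, e.1 * e.2 <= m.+1 * Z)%N ->
  \prod_(e : 'I_g * 'I_k) (1 - (e.1 * e.2)%:R / (m.+1 * Z)%:R) <= prob_no_active R g k m Z.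
Proof.
move=> Z_gt0 weight_le; have s_gt0 : (0 < m.+1 * Z)%N by rewrite muln_gt0.
have factorE (e : 'I_g * 'I_k) :
    1 - (e.1 * e.2)%:R / (m.+1 * Z)%:R = (m.+1 * Z - e.1 * e.2)%N%:R / (m.+1 * Z)%:R :> R.
  by rewrite natrB ?weight_le // mulrBl divff // pnatr_eq0 -lt0n.
rewrite (eq_bigr _ (fun e _ => factorE e)).
rewrite prodf_div -!natr_prod prod_nat_const card_prod !card_ord /prob_no_active card_codes.
by rewrite ler_pM2r ?invr_gt0 ?ltr0n ?expn_gt0 ?s_gt0 // ler_nat card_no_active_ge.
Qed.

End RealBounds.

Lemma exists_no_active g k m Z : (forall e : 'I_g * 'I_k, e.1 * e.2 < m.+1 * Z)%N ->
  exists (P : partmx g k m) (L : liftmx g k Z), no_active P L.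
Proof.
move=> weight_lt; have : (0 < #|[set PL : partmx g k m * liftmx g k Z | no_active PL.1 PL.2]|)%N.
  by apply: leq_trans (card_no_active_ge g k m Z); rewrite prodn_gt0 // => e; rewrite subn_gt0.
by case/card_gt0P => -[P L]; rewrite inE => no_act; exists P, L.
Qed.

Section Corollary.

Variables (R : realType) (g k m Z : nat).
Hypotheses (g_ge2 : (2 <= g)%N) (k_ge2 : (2 <= k)%N) (gk_ne22 : ~~ ((g == 2%N) && (k == 2%N))).
Hypothesis Z_gt0 : (0 < Z)%N.
Hypothesis lift_large : (2 * m ^ 2 + 4 * m + 3)%N%:R / (3 * (m.+1 ^ 3)%N%:R * Z%:R)
  <= Num.max (termI R g k) (termII R g k).

Local Notation s := (m.+1 * Z)%N.
Local Notation x := (g * k - g - k)%N.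

Lemma base_graph_bounds :
  [/\ (0 < x)%N, (x.+1 = (g - 1) * (k - 1))%N, (3 <= Delta g k)%N & (3 * x.+1 <= 2 * Delta g k)%N].
Proof.
rewrite /Delta; case: g g_ge2 gk_ne22 => [|[|a]] //; case: k k_ge2 => [|[|b]] //= _ _ ab_gt0.
have : (0 < a + b)%N by case: a b ab_gt0 => [|a] [|b].
by split; nia.
Qed.

Lemma edge_weight_le (e : 'I_g * 'I_k) : (e.1 * e.2 <= x.+1)%N.
Proof.
have [_ -> _ _] := base_graph_bounds.
by case: e => i j /=; apply: leq_mul; rewrite leq_subRL ?addn1 ?ltn_ord //; lia.
Qed.

Lemma termI_case_weight_lt_lift : termII R g k <= termI R g k -> (x.+1 < s)%N.
Proof.
move=> le_II_I; have [_ _ D_ge3 xD] := base_graph_bounds.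
have D_gt0 : (0 < Delta g k)%N by apply: leq_trans D_ge3.
move: lift_large; rewrite max_l // => /le_trans/(_ (pow_pred_div_pow_le_inv R D_gt0)).
rewrite -[(Delta g k)%:R^-1]mul1r -[1]/(1%:R) -!natrM ler_ratio_nat ?D_gt0 ?muln_gt0 ?expn_gt0 ?Z_gt0 //.
have -> : (2 * m ^ 2 + 4 * m + 3 = 2 * m.+1 ^ 2 + 1)%N by rewrite !expnS expn0; lia.
have -> : (3 * m.+1 ^ 3 * Z = m.+1 ^ 2 * (3 * s))%N by rewrite expnSr; lia.
move=> le_D; have : (m.+1 ^ 2 * (2 * Delta g k) < m.+1 ^ 2 * (3 * s))%N by nia.
rewrite ltn_pmul2l ?expn_gt0 //; lia.
Qed.

Lemma termII_case_lift_ge : termI R g k <= termII R g k -> (4 * x <= s)%N.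
Proof.
move=> le_I_II; have [x_gt0 _ _ _] := base_graph_bounds.
move: lift_large; rewrite max_r // /termII -!natrM.
rewrite ler_ratio_nat ?muln_gt0 ?expn_gt0 ?Z_gt0 ?x_gt0 //.
have -> : (2 * m ^ 2 + 4 * m + 3 = 2 * m.+1 ^ 2 + 1)%N by rewrite !expnS expn0; lia.
have -> : (3 * m.+1 ^ 3 * Z = m.+1 ^ 2 * (3 * s))%N by rewrite expnSr; lia.
move=> le_x; have : (m.+1 ^ 2 * (512 * x) <= m.+1 ^ 2 * (81 * s))%N by nia.
rewrite leq_pmul2l ?expn_gt0 //; lia.
Qed.

Lemma edge_weight_lt_lift (e : 'I_g * 'I_k) : (e.1 * e.2 < s)%N.
Proof.
apply: leq_ltn_trans (edge_weight_le e) _.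
have [/ltW le_II_I | le_I_II] := ltP (termII R g k) (termI R g k).
  exact: termI_case_weight_lt_lift.
have [x_gt0 _ _ _] := base_graph_bounds; have := termII_case_lift_ge le_I_II; lia.
Qed.

Lemma lower_bound_le_prod :
  lower_bound R g k <= \prod_(e : 'I_g * 'I_k) (1 - (e.1 * e.2)%:R / s%:R).
Proof.
have [x_gt0 _ D_ge3 _] := base_graph_bounds.
rewrite /lower_bound; case: ifP => [_ | /negbT]; last first.
  rewrite -leNgt => /termII_case_lift_ge lift_ge.
  have card_edges : #|{: 'I_g * 'I_k}| = (g * k)%N by rewrite card_prod !card_ord.
  rewrite -[X in _ ^+ X]card_edges -prodr_const; apply: ler_prod => e _; apply/andP; split.
    by rewrite subr_ge0 -natrM ler_pdivrMr ?ltr0n ?muln_gt0 // mul1r ler_nat; lia.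
  rewrite lerD2l lerN2 -natrM ler_ratio_nat ?muln_gt0 ?x_gt0 ?Z_gt0 //.
  by rewrite addn1 leq_mul ?edge_weight_le.
set w := (\sum_(e : 'I_g * 'I_k) e.1 * e.2)%N.
have -> : (g * (g - 1) * k * (k - 1) * Delta g k)%N%:R / 8 = w%:R * (Delta g k)%:R / 2 :> R.
  have -> : (g * (g - 1) * k * (k - 1) * Delta g k = w * 4 * Delta g k)%N.
    by rewrite sum_edge_weights !subn1 !mulnA.
  by rewrite !natrM; field.
apply: le_trans (powR_1Bdiv_le_expR _ _) (expR_neg_sum_le_prod _ edge_weight_lt_lift).
  by rewrite ltr_nat.
exact: ler0n.
Qed.

End Corollary.

Unset Implicit Arguments.

Theorem corollary1 (R : realType) (g k m Lc Z : nat) :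
  (2 <= g)%N -> (2 <= k)%N -> ~~ ((g == 2%N) && (k == 2%N)) ->
  (m.+1 <= Lc)%N -> (1 <= Z)%N ->
  (2 * m ^ 2 + 4 * m + 3)%N%:R / (3 * (m.+1 ^ 3)%N%:R * Z%:R)
    <= Num.max (termI R g k) (termII R g k) ->
  lower_bound R g k <= prob_no_active R g k m Z /\
  exists (P : partmx g k m) (Lf : liftmx g k Z),
    no_active P Lf /\ @girth_ge6 g k m Z Lc P Lf.
Proof.
move=> g_ge2 k_ge2 gk_ne22 _ Z_gt0 lift_large.
have weight_lt := edge_weight_lt_lift g_ge2 k_ge2 gk_ne22 Z_gt0 lift_large.
split.
  apply: le_trans (lower_bound_le_prod g_ge2 k_ge2 gk_ne22 Z_gt0 lift_large) _.
  by apply: prob_no_active_ge => // e; apply: ltnW.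
have [P [L no_act]] := exists_no_active weight_lt.
by exists P, L; split => //; apply: (no_active_girth_ge6 (Lc := Lc)).
Qed.
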